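(* Let $D$ be an acyclic digraph, let $G$ be an induced subgraph of $P(D)$, and let $H$ be a subgraph of $G$ such that (i) every maximal clique of $H$ is also a maximal clique of $G$; (ii) any maximal clique of $G$ belonging to $H$ and any maximal clique of $G$ not belonging to $H$ share at most one vertex. Let $$X=\{x \in V(H) \cup (V(D)\setminus V(G)) : N_D^-[x] \cap V(H) \text{ is a clique of size at least two in } H\},$$ and let $D^*$ be the digraph with vertex set $V(D^* ) = V(H) \cup (V(D)\setminus V(G))$ and arc set $$A(D^* )=\bigcup_{x \in X} \left[N_D^-[x] \cap V(H),\{x\}\right]_D .$$ Then $P(D^* )$ contains $H$ as an induced subgraph.
   Context: All graphs are finite and simple. For an acyclic digraph $D$, the phylogeny graph $P(D)$ is the graph on $V(D)$ in which distinct vertices $u,v$ are adjacent if and only if $(u,v)\in A(D)$, or $(v,u)\in A(D)$, or there is a vertex $w$ with $(u,w),(v,w)\in A(D)$. For a vertex $x$ of a digraph $D$, $N_D^-[x]$ denotes the closed in-neighborhood $\{x\}\cup\{u : (u,x)\in A(D)\}$. For vertex sets $U,V$ of $D$, $[U,V]_D$ denotes the set of arcs of $D$ with tail in $U$ and head in $V$. A clique of $G$ ''belongs to $H$'' if it is a clique of $H$ (all its vertices are in $V(H)$ and all edges among them are in $E(H)$). *)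

From mathcomp Require Import all_boot.
Set Implicit Arguments. Unset Strict Implicit. Unset Printing Implicit Defensive.

Section Defs.
Variable T : finType.

(* A digraph is a vertex set V : {set T} with an arc relation a : rel T
   (arcs are pairs (u,v) with a u v). Acyclic: no directed cycle, i.e. for
   every arc (x,y), x is not reachable from y (this also excludes loops). *)
Definition acyclic (a : rel T) : Prop :=
  forall x y, a x y -> ~~ connect a y x.

Definition phylo_adj (V : {set T}) (a : rel T) (u v : T) : bool :=
  (u != v) && [|| a u v, a v u | [exists w in V, a u w && a v w]].

Definition is_clique (V : {set T}) (e : rel T) (S : {set T}) : bool :=
  (S \subset V) && [forall x in S, forall y in S, (x != y) ==> e x y].

Definition is_maxclique (V : {set T}) (e : rel T) (S : {set T}) : bool :=
  is_clique V e S &&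
  [forall S' : {set T}, (is_clique V e S' && (S \subset S')) ==> (S' == S)].

Definition in_nbhd_closed (a : rel T) (x : T) : {set T} :=
  x |: [set u | a u x].

End Defs.

From mathcomp Require Import all_boot.
Set Implicit Arguments. Unset Strict Implicit. Unset Printing Implicit Defensive.

(* Every arc of D* lies inside the clique N_D^-[x] ∩ V(H) of some x ∈ X, so
   adjacency in P(D* ) forces adjacency in H.  Conversely, an edge uv of H lies
   in some N_D^-[w]; extend uv to a maximal clique K of H and N_D^-[w] ∩ V(G)
   to a maximal clique K' of G.  By (i) K is a maximal clique of G belonging
   to H, and K ∩ K' ⊇ {u, v}, so by (ii) K' belongs to H too.  Hence
   N_D^-[w] ∩ V(H) is a clique of H with at least two vertices, and w lies in
   V(D* ) (if w ∈ V(G) then w ∈ K' ⊆ V(H)): thus w ∈ X and u, v are common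
   in-neighbours of w in D*. *)

Section Cliques.
Variables (T : finType) (V : {set T}) (e : rel T).

Lemma is_cliqueP (S : {set T}) :
  reflect (S \subset V /\ {in S &, forall x y, x != y -> e x y})
          (is_clique V e S).
Proof.
apply: (iffP andP) => -[sSV cl]; split=> //.
  move=> x y xS yS; move/forallP/(_ x)/implyP/(_ xS): cl.
  by move/forallP/(_ y)/implyP/(_ yS)/implyP.
apply/forallP=> x; apply/implyP=> xS; apply/forallP=> y; apply/implyP=> yS.
by apply/implyP; apply: cl.
Qed.

Lemma clique_subset (S S' : {set T}) :
  is_clique V e S -> S' \subset S -> is_clique V e S'.
Proof.
move=> /is_cliqueP[sSV cl] sS'S; apply/is_cliqueP; split; first exact: subset_trans sSV.
by move=> x y xS' yS'; apply: cl; apply: (subsetP sS'S).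
Qed.

Lemma clique_set2 u v :
  u \in V -> v \in V -> e u v -> e v u -> is_clique V e [set u; v].
Proof.
move=> uV vV euv evu; apply/is_cliqueP; split.
  by apply/subsetP=> x; rewrite !inE => /orP[] /eqP->.
by move=> x y; rewrite !inE => /orP[]/eqP-> /orP[]/eqP->; rewrite ?eqxx.
Qed.

Lemma maxclique_exists (S : {set T}) :
  is_clique V e S -> exists2 K, is_maxclique V e K & S \subset K.
Proof.
move=> cS; have cSS : [pred K | is_clique V e K & S \subset K] S by rewrite /= cS subxx.
have [K /andP[cK sSK] Kmax] := arg_maxnP (fun K : {set T} => #|K|) cSS.
exists K => //; rewrite /is_maxclique cK; apply/forallP=> K'.
apply/implyP=> /andP[cK' sKK']; rewrite eq_sym eqEcard sKK'.
by apply: Kmax; rewrite /= cK' (subset_trans sSK sKK').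
Qed.

End Cliques.

Section PhylogenyGraph.
Variables (T : finType) (a : rel T).

Lemma phylo_adj_in_nbhd_closed (V : {set T}) u v :
  phylo_adj V a u v ->
  exists w, (u \in in_nbhd_closed a w) && (v \in in_nbhd_closed a w).
Proof.
case/andP=> _ /or3P[auv | avu | /existsP[w /and3P[_ auw avw]]].
- by exists v; rewrite !inE eqxx auv orbT.
- by exists u; rewrite !inE eqxx avu orbT.
- by exists w; rewrite !inE auw avw !orbT.
Qed.

Lemma in_nbhd_closed_phylo_adj (V : {set T}) w u v :
  w \in V -> u != v -> u \in in_nbhd_closed a w -> v \in in_nbhd_closed a w ->
  phylo_adj V a u v.
Proof.
move=> wV neq_uv; rewrite /phylo_adj neq_uv !inE.
case/orP=> [/eqP uw | auw]; case/orP=> [/eqP vw | avw].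
- by rewrite uw vw eqxx in neq_uv.
- by rewrite uw avw orbT.
- by rewrite vw auw.
- by apply/or3P/Or33/existsP; exists w; rewrite wV auw avw.
Qed.

Lemma in_nbhd_closed_clique (V W : {set T}) w :
  w \in W -> is_clique V (phylo_adj W a) (in_nbhd_closed a w :&: V).
Proof.
move=> wW; apply/is_cliqueP; split=> [|x y]; first exact: subsetIr.
move=> /setIP[xw _] /setIP[yw _] neq_xy.
exact: in_nbhd_closed_phylo_adj wW neq_xy xw yw.
Qed.

End PhylogenyGraph.

Section Construction.
Variables (T : finType) (a : rel T) (VG VH : {set T}) (eH : rel T).

Local Notation PG := (phylo_adj setT a).

Definition Vstar := VH :|: ~: VG.

Definition Xstar := [set x in Vstar |
  is_clique VH eH (in_nbhd_closed a x :&: VH) &&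
  (2 <= #|in_nbhd_closed a x :&: VH|)].

Definition Astar : rel T := fun u x =>
  [&& x \in Xstar, u \in in_nbhd_closed a x :&: VH & a u x].

Lemma in_nbhd_closed_Astar x :
  in_nbhd_closed Astar x =
  if x \in Xstar then in_nbhd_closed a x :&: (x |: VH) else [set x].
Proof.
apply/setP=> u; rewrite /in_nbhd_closed /Astar.
case: (x \in Xstar); rewrite !inE ?orbF //.
by case: (u == x); case: (a u x); case: (u \in VH).
Qed.

Lemma Astar_adj_eH u v :
  u \in VH -> v \in VH -> phylo_adj Vstar Astar u v -> eH u v.
Proof.
move=> uH vH adj_uv; have neq_uv : u != v by case/andP: adj_uv.
have [w] := phylo_adj_in_nbhd_closed adj_uv; rewrite in_nbhd_closed_Astar.
case: ifP => [wX | _]; last first.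
  by rewrite !inE => /andP[/eqP uw /eqP vw]; rewrite uw vw eqxx in neq_uv.
rewrite !inE uH vH !orbT !andbT => /andP[uw vw].
move: wX; rewrite /Xstar inE => /and3P[_ /is_cliqueP[_ cliq_w] _].
by apply: cliq_w; rewrite // !inE ?uw ?vw ?uH ?vH.
Qed.

Hypothesis sHG : VH \subset VG.
Hypothesis eH_sym : forall u v, eH u v = eH v u.
Hypothesis eH_PG : forall u v, eH u v -> [&& u \in VH, v \in VH & PG u v].
Hypothesis maxclique_HG : forall K, is_maxclique VH eH K -> is_maxclique VG PG K.
Hypothesis maxclique_meet : forall K K',
  is_maxclique VG PG K -> is_clique VH eH K ->
  is_maxclique VG PG K' -> ~~ is_clique VH eH K' -> #|K :&: K'| <= 1.

Lemma in_nbhd_closed_sub_clique_H u v w :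
  eH u v -> u \in in_nbhd_closed a w -> v \in in_nbhd_closed a w ->
  exists2 K', is_clique VH eH K' & in_nbhd_closed a w :&: VG \subset K'.
Proof.
move=> euv uw vw; have /and3P[uH vH /andP[neq_uv _]] := eH_PG euv.
have evu : eH v u by rewrite eH_sym.
have [K maxK suvK] := maxclique_exists (clique_set2 uH vH euv evu).
have [K' maxK' swK'] := maxclique_exists (in_nbhd_closed_clique a VG (in_setT w)).
exists K' => //; apply/negPn/negP=> not_cliqueK'.
have le1 := maxclique_meet (maxclique_HG maxK) (andP maxK).1 maxK' not_cliqueK'.
have suvKK' : [set u; v] \subset K :&: K'.
  rewrite subsetI suvK; apply/subsetP=> x; rewrite !inE => /orP[]/eqP->;
  by apply: (subsetP swK'); rewrite inE ?uw ?vw (subsetP sHG).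
by have := leq_trans (subset_leq_card suvKK') le1; rewrite cards2 neq_uv.
Qed.

Lemma mem_Xstar u v w :
  eH u v -> u \in in_nbhd_closed a w -> v \in in_nbhd_closed a w -> w \in Xstar.
Proof.
move=> euv uw vw; have /and3P[uH vH /andP[neq_uv _]] := eH_PG euv.
have [K' cliqueK' swK'] := in_nbhd_closed_sub_clique_H euv uw vw.
have swHK' : in_nbhd_closed a w :&: VH \subset K'.
  by apply: subset_trans swK'; apply: setIS.
rewrite /Xstar /Vstar !inE (clique_subset cliqueK' swHK') /=; apply/andP; split.
  have [wG | ] := boolP (w \in VG); last by rewrite orbT.
  by rewrite (subsetP (andP cliqueK').1) // (subsetP swK') // !inE eqxx.
have suvw : [set u; v] \subset in_nbhd_closed a w :&: VH.
  by apply/subsetP=> x /set2P[]->; apply/setIP.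
by have := subset_leq_card suvw; rewrite cards2 neq_uv.
Qed.

Lemma eH_Astar_adj u v : eH u v -> phylo_adj Vstar Astar u v.
Proof.
move=> euv; have /and3P[uH vH PGuv] := eH_PG euv.
have [w /andP[uw vw]] := phylo_adj_in_nbhd_closed PGuv.
have wX := mem_Xstar euv uw vw.
have wVstar : w \in Vstar by move: wX; rewrite /Xstar inE => /andP[].
have neq_uv : u != v by case/andP: PGuv.
have Astar_w x : x \in VH -> x \in in_nbhd_closed a w -> x \in in_nbhd_closed Astar w.
  move=> xH xw; rewrite in_nbhd_closed_Astar wX.
  by apply/setIP; rewrite in_setU1 xH orbT.
by apply: (in_nbhd_closed_phylo_adj wVstar neq_uv); apply: Astar_w.
Qed.

End Construction.

Theorem mainTheorem1 (T : finType) (a : rel T) (VG VH : {set T}) (eH : rel T) :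
  acyclic a ->
  VH \subset VG ->
  (forall u v, eH u v = eH v u) ->
  (forall u v, eH u v ->
     [&& u \in VH, v \in VH & phylo_adj setT a u v]) ->
  (forall K, is_maxclique VH eH K -> is_maxclique VG (phylo_adj setT a) K) ->
  (forall K K', is_maxclique VG (phylo_adj setT a) K -> is_clique VH eH K ->
     is_maxclique VG (phylo_adj setT a) K' -> ~~ is_clique VH eH K' ->
     #|K :&: K'| <= 1) ->
  let Vstar := VH :|: ~: VG in
  let X := [set x in Vstar |
             is_clique VH eH (in_nbhd_closed a x :&: VH) &&
             (2 <= #|in_nbhd_closed a x :&: VH|)] in
  let Astar : rel T := fun u x =>
             [&& x \in X, u \in in_nbhd_closed a x :&: VH & a u x] in
  forall u v, u \in VH -> v \in VH -> phylo_adj Vstar Astar u v = eH u v.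
Proof.
move=> _ sHG eH_sym eH_PG maxclique_HG maxclique_meet Vstar X Astar u v uH vH.
apply/idP/idP; first exact: Astar_adj_eH.
exact: (eH_Astar_adj sHG eH_sym eH_PG maxclique_HG maxclique_meet).
Qed.
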